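(* Let $\mathcal A=(a_{ij})_{0\le i,j\le2}$ and $\mathcal B=(b_{ij})_{0\le i,j\le 2}$ be symmetric $3\times3$ matrices whose 12 independent entries $a_{ij},b_{ij}$ ($i\le j$) are indeterminates, and let $p_0,q_0,p_1,q_1$ be further indeterminates. For $s,t$ put $\mathbf V(s,t)=(s^2,st,t^2)^T$, $\mathbf F(s,t)=(\mathcal A\mathbf V(s,t))\times(\mathcal B\mathbf V(s,t))$ (vector cross product) with components $F^{(1)},F^{(2)},F^{(3)}$, and $Q(s,t)=(F^{(2)}(s,t))^2-F^{(1)}(s,t)F^{(3)}(s,t)$. Define polynomials $p_n,q_n$ by $$p_{n+1}=q_{n-1}F^{(1)}(p_n,q_n)-p_{n-1}F^{(2)}(p_n,q_n),\qquad q_{n+1}=q_{n-1}F^{(2)}(p_n,q_n)-p_{n-1}F^{(3)}(p_n,q_n)\qquad(n\ge1),$$ and set $Q_n=Q(p_n,q_n)$. Then for every $n\ge1$, $Q_n$ divides $Q_{n+1}$ in the polynomial ring $\mathbb Z[a_{ij},b_{ij},p_0,q_0,p_1,q_1]$.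
   Context: This recurrence is the homogenisation ($u_n=p_n/q_n$) of the 12-parameter symmetric QRT map $u_{n+1}=\frac{f^{(1)}(u_n)-u_{n-1}f^{(2)}(u_n)}{f^{(2)}(u_n)-u_{n-1}f^{(3)}(u_n)}$ with $\mathbf f(u)=\mathbf F(u,1)$. *)

From HB Require Import structures.
From mathcomp Require Import all_boot all_order all_algebra.
From mathcomp Require Import mpoly.
Set Implicit Arguments. Unset Strict Implicit. Unset Printing Implicit Defensive.
Import GRing.Theory.
Local Open Scope ring_scope.

(* The ring Z[a_ij, b_ij (i<=j), p0, q0, p1, q1]: 16 indeterminates.
   Index convention:
     0..5   : a00 a01 a02 a11 a12 a22
     6..11  : b00 b01 b02 b11 b12 b22
     12..15 : p0 q0 p1 q1                                               *)
Definition PR := {mpoly int[16]}.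

Definition var (k : nat) : PR := 'X_(inord k).

Definition symidx (i j : nat) : nat :=
  let i' := minn i j in let j' := maxn i j in
  match i', j' with
  | 0, 0 => 0 | 0, 1 => 1 | 0, _ => 2
  | 1, 1 => 3 | 1, _ => 4 | _, _ => 5
  end%N.

Definition matA : 'M[PR]_3 := \matrix_(i < 3, j < 3) var (symidx i j).
Definition matB : 'M[PR]_3 := \matrix_(i < 3, j < 3) var (6 + symidx i j).

Definition p0 : PR := var 12.
Definition q0 : PR := var 13.
Definition p1 : PR := var 14.
Definition q1 : PR := var 15.

Definition Vst (s t : PR) : 'cV[PR]_3 :=
  \col_(i < 3) (if i == 0 :> nat then s ^+ 2 else if i == 1 :> nat then s * t else t ^+ 2).

Definition cross (u v : 'cV[PR]_3) : 'cV[PR]_3 :=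
  let u0 := u (inord 0) 0 in let u1 := u (inord 1) 0 in let u2 := u (inord 2) 0 in
  let v0 := v (inord 0) 0 in let v1 := v (inord 1) 0 in let v2 := v (inord 2) 0 in
  \col_(i < 3) (if i == 0 :> nat then u1 * v2 - u2 * v1
                else if i == 1 :> nat then u2 * v0 - u0 * v2
                else u0 * v1 - u1 * v0).

Definition Fst (s t : PR) : 'cV[PR]_3 := cross (matA *m Vst s t) (matB *m Vst s t).
Definition F1 (s t : PR) : PR := Fst s t (inord 0) 0.
Definition F2 (s t : PR) : PR := Fst s t (inord 1) 0.
Definition F3 (s t : PR) : PR := Fst s t (inord 2) 0.

Definition Qst (s t : PR) : PR := (F2 s t) ^+ 2 - F1 s t * F3 s t.

(* pqpair n = ((p_n, q_n), (p_{n+1}, q_{n+1})) *)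
Fixpoint pqpair (n : nat) : (PR * PR) * (PR * PR) :=
  match n with
  | 0 => ((p0, q0), (p1, q1))
  | S m =>
    let: ((pm, qm), (pn, qn)) := pqpair m in
    ((pn, qn),
     (qm * F1 pn qn - pm * F2 pn qn, qm * F2 pn qn - pm * F3 pn qn))
  end.

Definition p_ (n : nat) : PR := (pqpair n).1.1.
Definition q_ (n : nat) : PR := (pqpair n).1.2.

Definition Q_ (n : nat) : PR := Qst (p_ n) (q_ n).

From Pilot Require Import Defs.
From HB Require Import structures.
From mathcomp Require Import all_boot all_order all_algebra.
From mathcomp Require Import mpoly.
From mathcomp Require Import ring.
Set Implicit Arguments. Unset Strict Implicit. Unset Printing Implicit Defensive.
Import GRing.Theory.
Local Open Scope ring_scope.

(* Write z = V(s,t), f = F(s,t) = Az x Bz and w = (y f_1 - x f_2, y f_2 - x f_3) for the next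
   point.  Expanding V(w) gives, for every vector P,
     P.V(w) = (a quadratic form in x, y) (P.f) + Q(s,t) (P.V(x,y)),
   and Az, Bz are orthogonal to f.  As A and B are symmetric, (A V(w)).z = (Az).V(w), so
   A V(w) and B V(w) are orthogonal to z modulo Q(s,t); their cross product F(w) is then
   parallel to z modulo Q(s,t), and since the discriminant vanishes on the conic of the
   V(s,t), both s^4 Q(w) and t^4 Q(w) are multiples of Q(s,t).  When s, t are the
   indeterminates p1, q1 the factors s^4 and t^4 are coprime, so Q(s,t) divides Q(w); the
   general case follows by substituting for p0, q0, p1, q1. *)

Lemma dvdr_of_coprime_multiples (R : idomainType) (a b e k : R) :
    e != 0 -> a != 0 ->
    (forall r1 r2, b * r1 = a * r2 -> exists r, r1 = r * a) ->
    (exists r1, a * k = r1 * e) -> (exists r2, b * k = r2 * e) ->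
  exists r, k = r * e.
Proof.
move=> e_neq0 a_neq0 coprime_ab [r1 akE] [r2 bkE].
have [r r1E] : exists r, r1 = r * a.
  apply: (coprime_ab _ r2); apply: (mulIf e_neq0).
  by rewrite -!mulrA -akE -bkE mulrCA.
by exists r; apply: (mulfI a_neq0); rewrite akE r1E; ring.
Qed.

Section MpolyVariables.
Variables (n : nat) (R : idomainType).
Implicit Types (i j : 'I_n) (p q : {mpoly R[n]}).

Lemma mpolyXU_neq0 i : 'X_i != 0 :> {mpoly R[n]}.
Proof.
apply/eqP => Xi0; have := @mcoeffXU n R i i.
by rewrite Xi0 mcoeff0 eqxx => /eqP; rewrite eq_sym oner_eq0.
Qed.

Lemma comp_mpolyX_mktuple k (h : 'I_n -> {mpoly R[k]}) i :
  'X_i \mPo [tuple h j | j < n] = h i.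
Proof. by rewrite comp_mpolyXU -tnth_nth tnth_mktuple. Qed.

Definition msubst0 i p := p \mPo [tuple if j == i then 0 else 'X_j | j < n].

HB.instance Definition _ i :=
  GRing.RMorphism.copy (msubst0 i) (comp_mpoly [tuple if j == i then 0 else 'X_j | j < n]).

Lemma msubst0X i j : msubst0 i 'X_j = if j == i then 0 else 'X_j.
Proof. exact: comp_mpolyX_mktuple. Qed.

Lemma msubst0_decomp i p : exists q, p = msubst0 i p + q * 'X_i.
Proof.
elim/mpolyind: p => [|c m p _ _ [q pE]]; first by exists 0; rewrite raddf0 mul0r addr0.
have -> : msubst0 i (c *: 'X_[m] + p) =
    c *: \prod_j (if j == i then 0 else 'X_j) ^+ m j + msubst0 i p.
  rewrite raddfD /= /msubst0 comp_mpolyZ comp_mpolyX; congr (_ *: _ + _).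
  by apply: eq_bigr => j _; rewrite tnth_map tnth_ord_tuple.
have [mi0 | [k mik]] : m i = 0%N \/ exists k, m i = k.+1.
  by case: (m i) => [|k]; [left | right; exists k].
- exists q; rewrite [in LHS]pE addrA; congr (_ *: _ + _ + _).
  rewrite mpolyXE_id; apply: eq_bigr => j _.
  by case: eqP => // ->; rewrite mi0 !expr0.
- exists (c *: ('X_i ^+ k * \prod_(j < n | j != i) 'X_j ^+ m j) + q).
  rewrite (bigD1 i) //= eqxx mik expr0n /= mul0r scaler0 add0r.
  rewrite {1}mpolyXE_id (bigD1 i) //= mik exprS [in LHS]pE.
  by rewrite mulrDl -scalerAl addrCA; congr (_ + (_ *: _ + _)); ring.
Qed.

Lemma mpolyXn_coprime i j k l p q : i != j ->
  'X_j ^+ k * p = 'X_i ^+ l * q -> exists r, p = r * 'X_i ^+ l.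
Proof.
move=> neq_ij; elim: l p q => [|l IHl] p q pqE; first by exists p; rewrite mulr1.
have [p' pE] := msubst0_decomp i p.
have p0 : msubst0 i p = 0.
  have neq_ji : (j == i) = false by rewrite eq_sym (negbTE neq_ij).
  have /eqP := congr1 (msubst0 i) pqE.
  rewrite !rmorphM !rmorphXn /= !msubst0X eqxx neq_ji expr0n /= mul0r.
  by rewrite mulf_eq0 expf_eq0 (negbTE (mpolyXU_neq0 j)) andbF => /eqP.
rewrite p0 add0r in pE.
have [r p'E] : exists r, p' = r * 'X_i ^+ l.
  apply: (IHl _ q); apply: (mulIf (mpolyXU_neq0 i)).
  by rewrite -mulrA -pE pqE exprS; ring.
by exists r; rewrite pE p'E exprS; ring.
Qed.

End MpolyVariables.

Section DotProduct.
Variables (R : comPzRingType) (n : nat).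
Implicit Types (u v : 'cV[R]_n) (M : 'M[R]_n).

Definition dotv u v : R := (u^T *m v) 0 0.

Lemma dotvC u v : dotv u v = dotv v u.
Proof. by rewrite /dotv -[u^T *m v]trmxK trmx_mul trmxK mxE. Qed.

Lemma dotv_mulmx_sym M u v : M^T = M -> dotv (M *m u) v = dotv u (M *m v).
Proof. by move=> symM; rewrite /dotv trmx_mul symM mulmxA. Qed.

End DotProduct.

Local Notation "u `[ k ]" := (u (inord k) 0) (at level 2, format "u `[ k ]").

(* The constructions of Defs over any commutative ring and for any matrices [A], [B];
   [Fst] and [Qst] are [qrtF matA matB] and [qrtQ matA matB] by conversion. *)
Section QRTMap.
Variable R : comPzRingType.
Implicit Types (s t x y e : R) (u v z f : 'cV[R]_3) (A B : 'M[R]_3).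

Definition veronese s t : 'cV[R]_3 :=
  \col_(i < 3) (if i == 0 :> nat then s ^+ 2 else if i == 1 :> nat then s * t else t ^+ 2).

Definition crossv u v : 'cV[R]_3 :=
  let u0 := u (inord 0) 0 in let u1 := u (inord 1) 0 in let u2 := u (inord 2) 0 in
  let v0 := v (inord 0) 0 in let v1 := v (inord 1) 0 in let v2 := v (inord 2) 0 in
  \col_(i < 3) (if i == 0 :> nat then u1 * v2 - u2 * v1
                else if i == 1 :> nat then u2 * v0 - u0 * v2
                else u0 * v1 - u1 * v0).

Definition qdisc u : R := u`[1] ^+ 2 - u`[0] * u`[2].

Definition qrtF A B s t := crossv (A *m veronese s t) (B *m veronese s t).

Definition qrtQ A B s t := qdisc (qrtF A B s t).

Definition qrtQ_next A B s t x y :=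
  qrtQ A B (y * (qrtF A B s t)`[0] - x * (qrtF A B s t)`[1])
           (y * (qrtF A B s t)`[1] - x * (qrtF A B s t)`[2]).

Lemma dotv3E u v : dotv u v = u`[0] * v`[0] + u`[1] * v`[1] + u`[2] * v`[2].
Proof.
rewrite /dotv mxE !big_ord_recr big_ord0 /= !mxE add0r.
by congr (u _ 0 * v _ 0 + u _ 0 * v _ 0 + u _ 0 * v _ 0); apply: val_inj; rewrite /= inordK.
Qed.

Lemma veroneseE s t k : (k < 3)%N ->
  (veronese s t)`[k] = if k == 0%N then s ^+ 2 else if k == 1%N then s * t else t ^+ 2.
Proof. by move=> lt_k3; rewrite mxE inordK. Qed.

Lemma qdisc_veronese s t : qdisc (veronese s t) = 0.
Proof. by rewrite /qdisc !veroneseE //=; ring. Qed.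

Lemma dotv_crossv_l u v : dotv u (crossv u v) = 0.
Proof. by rewrite dotv3E /crossv !mxE !inordK //=; ring. Qed.

Lemma dotv_crossv_r u v : dotv v (crossv u v) = 0.
Proof. by rewrite dotv3E /crossv !mxE !inordK //=; ring. Qed.

Lemma dotv_veronese_next u f x y :
  dotv u (veronese (y * f`[0] - x * f`[1]) (y * f`[1] - x * f`[2])) =
  (f`[0] * y ^+ 2 - f`[1] * x * y *+ 2 + f`[2] * x ^+ 2) * dotv u f
  + qdisc f * dotv u (veronese x y).
Proof. by rewrite !dotv3E !veroneseE //= /qdisc; ring. Qed.

(* Modulo [e], [z] is orthogonal to [a] and [b], hence parallel to [g = a x b]:
   [g_k z_0 = g_0 z_k], so [z_0^2 (g_1^2 - g_0 g_2) = g_0^2 (z_1^2 - z_0 z_2) = 0]. *)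
Lemma cross_disc_dvd (a0 a1 a2 b0 b1 b2 z0 z1 z2 e al be : R) :
    a0 * z0 + a1 * z1 + a2 * z2 = al * e -> b0 * z0 + b1 * z1 + b2 * z2 = be * e ->
    z1 ^+ 2 = z0 * z2 ->
  exists r, z0 ^+ 2 * ((a2 * b0 - a0 * b2) ^+ 2 - (a1 * b2 - a2 * b1) * (a0 * b1 - a1 * b0))
            = r * e.
Proof.
move=> az bz z1E.
set g0 := a1 * b2 - a2 * b1; set g1 := a2 * b0 - a0 * b2; set g2 := a0 * b1 - a1 * b0.
set h1 := al * b1 - be * a1; set h2 := al * b2 - be * a2.
have g1E : g1 * z0 = g0 * z1 - h2 * e.
  transitivity (g0 * z1 - (b2 * (a0 * z0 + a1 * z1 + a2 * z2) - a2 * (b0 * z0 + b1 * z1 + b2 * z2))).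
    by rewrite /g0 /g1; ring.
  by rewrite az bz /h2; ring.
have g2E : g2 * z0 = g0 * z2 + h1 * e.
  transitivity (g0 * z2 + (b1 * (a0 * z0 + a1 * z1 + a2 * z2) - a1 * (b0 * z0 + b1 * z1 + b2 * z2))).
    by rewrite /g0 /g2; ring.
  by rewrite az bz /h1; ring.
exists (h2 ^+ 2 * e - g0 * z1 * h2 *+ 2 - g0 * z0 * h1).
have -> : z0 ^+ 2 * (g1 ^+ 2 - g0 * g2) = (g1 * z0) ^+ 2 - g0 * z0 * (g2 * z0) by ring.
rewrite g1E g2E.
transitivity (g0 ^+ 2 * (z1 ^+ 2 - z0 * z2) + (h2 ^+ 2 * e - g0 * z1 * h2 *+ 2 - g0 * z0 * h1) * e).
  by ring.
by rewrite z1E subrr mulr0 add0r.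
Qed.

Lemma qdisc_crossv_dvd a b z e al be :
    dotv a z = al * e -> dotv b z = be * e -> qdisc z = 0 ->
  (exists r, z`[0] ^+ 2 * qdisc (crossv a b) = r * e) /\
  (exists r, z`[2] ^+ 2 * qdisc (crossv a b) = r * e).
Proof.
rewrite !dotv3E => az bz /eqP; rewrite subr_eq0 => /eqP z1E.
rewrite /qdisc /crossv !mxE !inordK //=; split; first exact: cross_disc_dvd az bz z1E.
have [r rE] := @cross_disc_dvd a`[2] a`[1] a`[0] b`[2] b`[1] b`[0] z`[2] z`[1] z`[0] e al be
  ltac:(by rewrite -az; ring) ltac:(by rewrite -bz; ring) ltac:(by rewrite z1E; ring).
by exists r; rewrite -rE; ring.
Qed.

Lemma qrtQ_10 A B : qrtQ A B 1 0 = qdisc (crossv (col 0 A) (col 0 B)).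
Proof.
suff colE (M : 'M[R]_3) : M *m veronese 1 0 = col 0 M by rewrite /qrtQ /qrtF !colE.
apply/matrixP => i j; rewrite !mxE big_ord_recl big1 => [|k _]; rewrite !mxE /=.
  by rewrite expr1n mulr1 addr0.
by rewrite mulr0 expr0n if_same mulr0.
Qed.

Lemma qrtQ_next_dvd A B : A^T = A -> B^T = B -> forall s t x y,
  (exists r, s ^+ 4 * qrtQ_next A B s t x y = r * qrtQ A B s t) /\
  (exists r, t ^+ 4 * qrtQ_next A B s t x y = r * qrtQ A B s t).
Proof.
move=> symA symB s t x y; rewrite /qrtQ_next.
set z := veronese s t; set f := qrtF A B s t.
set w := veronese (y * f`[0] - x * f`[1]) (y * f`[1] - x * f`[2]).
have orth M : M^T = M -> dotv (M *m z) f = 0 ->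
    dotv (M *m w) z = dotv (M *m z) (veronese x y) * qrtQ A B s t.
  move=> symM Mzf; rewrite dotv_mulmx_sym // dotvC dotv_veronese_next Mzf.
  by rewrite mulr0 add0r mulrC.
have [] := qdisc_crossv_dvd (orth A symA (dotv_crossv_l _ _))
  (orth B symB (dotv_crossv_r _ _)) (qdisc_veronese s t).
by rewrite !veroneseE //= -!exprM.
Qed.

End QRTMap.

Section QRTMapMorphism.
Variables (R S : comPzRingType) (f : {rmorphism R -> S}).
Implicit Types (s t x y : R) (u v : 'cV[R]_3) (A B : 'M[R]_3).

Lemma map_veronese s t : map_mx f (veronese s t) = veronese (f s) (f t).
Proof. by apply/matrixP => i j; rewrite !mxE !(fun_if f) !rmorphXn rmorphM. Qed.

Lemma map_crossv u v : map_mx f (crossv u v) = crossv (map_mx f u) (map_mx f v).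
Proof.
apply/matrixP => i j; rewrite !mxE.
by case: ifP => _; [|case: ifP => _]; rewrite rmorphB !rmorphM.
Qed.

Lemma map_qrtF A B s t :
  map_mx f (qrtF A B s t) = qrtF (map_mx f A) (map_mx f B) (f s) (f t).
Proof. by rewrite /qrtF map_crossv !map_mxM !map_veronese. Qed.

Lemma rmorph_qdisc u : f (qdisc u) = qdisc (map_mx f u).
Proof. by rewrite /qdisc rmorphB rmorphXn rmorphM !mxE. Qed.

Lemma rmorph_qrtQ A B s t :
  f (qrtQ A B s t) = qrtQ (map_mx f A) (map_mx f B) (f s) (f t).
Proof. by rewrite /qrtQ rmorph_qdisc map_qrtF. Qed.

Lemma rmorph_qrtQ_next A B s t x y :
  f (qrtQ_next A B s t x y) =
  qrtQ_next (map_mx f A) (map_mx f B) (f s) (f t) (f x) (f y).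
Proof.
have fF k : f (qrtF A B s t)`[k] = (qrtF (map_mx f A) (map_mx f B) (f s) (f t))`[k].
  by rewrite -map_qrtF [in RHS]mxE.
by rewrite /qrtQ_next rmorph_qrtQ !rmorphB !rmorphM !fF.
Qed.

End QRTMapMorphism.

Lemma symidxC i j : symidx i j = symidx j i.
Proof. by rewrite /symidx minnC maxnC. Qed.

Lemma symidx_lt6 i j : (symidx i j < 6)%N.
Proof. by rewrite /symidx; case: (minn i j) => [|[|?]]; case: (maxn i j) => [|[|?]]. Qed.

Lemma matA_sym : matA^T = matA.
Proof. by apply/matrixP => i j; rewrite !mxE symidxC. Qed.

Lemma matB_sym : matB^T = matB.
Proof. by apply/matrixP => i j; rewrite !mxE symidxC. Qed.

(* At a02 = b00 = p1 = 1 and all other indeterminates 0, A V(p1,q1) = e_2 and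
   B V(p1,q1) = e_0, so that Q(p1,q1) = 1. *)
Lemma qrtQ_p1q1_neq0 : qrtQ matA matB p1 q1 != 0.
Proof.
pose v (i : 'I_16) : int := [|| i == 2 :> nat, i == 6 :> nat | i == 14 :> nat]%:R.
have vE k : (k < 16)%N -> meval v (var k) = [|| k == 2, k == 6 | k == 14]%N%:R.
  by move=> lt_k16; rewrite /var mevalXU /v inordK.
apply/eqP => /(congr1 (meval v)); rewrite rmorph0 rmorph_qrtQ.
rewrite /p1 /q1 /= !vE // qrtQ_10.
by rewrite /qdisc /crossv !mxE !inordK //= !vE //=.
Qed.

Lemma qrtQ_next_p1q1 :
  exists r, qrtQ_next matA matB p1 q1 p0 q0 = r * qrtQ matA matB p1 q1.
Proof.
have [p1_dvd q1_dvd] := qrtQ_next_dvd matA_sym matB_sym p1 q1 p0 q0.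
apply: (dvdr_of_coprime_multiples qrtQ_p1q1_neq0 _ _ p1_dvd q1_dvd).
  exact/expf_neq0/mpolyXU_neq0.
by move=> r1 r2; apply: mpolyXn_coprime; rewrite -val_eqE /= !inordK.
Qed.

Definition pq_subst (x y s t : PR) : PR -> PR :=
  comp_mpoly [tuple if (12 <= i)%N then nth 0 [:: x; y; s; t] (i - 12) else 'X_i | i < 16].

HB.instance Definition _ x y s t := GRing.RMorphism.copy (pq_subst x y s t)
  (comp_mpoly [tuple if (12 <= i)%N then nth 0 [:: x; y; s; t] (i - 12) else 'X_i | i < 16]).

Lemma pq_subst_var x y s t k : (k < 16)%N ->
  pq_subst x y s t (var k) = if (12 <= k)%N then nth 0 [:: x; y; s; t] (k - 12) else var k.
Proof. by move=> lt_k16; rewrite /pq_subst /var comp_mpolyX_mktuple inordK. Qed.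

Lemma map_pq_subst_matA x y s t : map_mx (pq_subst x y s t) matA = matA.
Proof.
apply/matrixP => i j; have lt_k6 := symidx_lt6 i j.
by rewrite !mxE pq_subst_var ?ifN -?ltnNge //; apply: leq_trans lt_k6 _.
Qed.

Lemma map_pq_subst_matB x y s t : map_mx (pq_subst x y s t) matB = matB.
Proof.
apply/matrixP => i j; have lt_k6 := symidx_lt6 i j.
by rewrite !mxE pq_subst_var ?ifN -?ltnNge ?ltn_add2l //; apply: leq_trans lt_k6 _.
Qed.

Lemma Qst_next_dvd (s t x y : PR) :
  exists r, Qst (y * F1 s t - x * F2 s t) (y * F2 s t - x * F3 s t) = r * Qst s t.
Proof.
change (exists r, qrtQ_next matA matB s t x y = r * qrtQ matA matB s t).
have [r rE] := qrtQ_next_p1q1.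
exists (pq_subst x y s t r); have := congr1 (pq_subst x y s t) rE.
rewrite rmorphM rmorph_qrtQ_next rmorph_qrtQ map_pq_subst_matA map_pq_subst_matB.
by rewrite /= !pq_subst_var.
Qed.

Lemma pqpair_shift m : (pqpair m.+1).1 = (pqpair m).2.
Proof. by rewrite /=; case: (pqpair m) => [[? ?] [? ?]]. Qed.

Lemma pq_recurrence m :
  p_ m.+2 = q_ m * F1 (p_ m.+1) (q_ m.+1) - p_ m * F2 (p_ m.+1) (q_ m.+1) /\
  q_ m.+2 = q_ m * F2 (p_ m.+1) (q_ m.+1) - p_ m * F3 (p_ m.+1) (q_ m.+1).
Proof. by rewrite /p_ /q_ !pqpair_shift /=; case: (pqpair m) => [[? ?] [? ?]]. Qed.

Theorem theorem7 (n : nat) : (1 <= n)%N -> exists r : PR, Q_ n.+1 = r * Q_ n.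
Proof.
case: n => // m _; rewrite /Q_.
have [-> ->] := pq_recurrence m.
exact: Qst_next_dvd.
Qed.
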